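(* Let $\mathbf G$ be a minimal counterexample such that $d(w)\ge 2$ for every $w\in V_2$. Then $\mathcal D+\sum_{v\in V_1}d(v)\ge 2n-12$.
   Context: A graph triple $\mathbf G=(G_1,G_2,G_3)$ of order $n$ consists of two disjoint $n$-vertex graphs $G_1=(V_1,E_1)$, $G_2=(V_2,E_2)$ and a bipartite graph $G_3=(V_1\cup V_2,E_3)$ with parts $V_1,V_2$. $\mathbf G$ packs if there is a bijection $f:V_1\to V_2$ with $vf(v)\notin E_3$ for all $v\in V_1$ and such that $uv\in E_1$ implies $f(u)f(v)\notin E_2$. For $v\in V_i$ ($i=1,2$), $d_i(v)$ is its degree in $G_i$ (its white degree), $d_3(v)$ its degree in $G_3$, and $d(v)=d_i(v)+d_3(v)$. Let $e_i=|E_i|$, $\Delta_i=\max_v d_i(v)$ for $i=1,2,3$, $\Delta_{3|i}=\max_{v\in V_i}d_3(v)$, $\mathcal D=\max\{\Delta_1+\max\{\Delta_{3|2}-4,0\},\ \Delta_2+\max\{\Delta_{3|1}-4,0\}\}$, and $F(\mathbf G)=e_1+e_2+e_3+\mathcal D$. Let $C=11\cdot195^2+4$. A minimal counterexample is a graph triple $\mathbf G$ of the smallest order $n$ among all graph triples satisfying $\Delta_1,\Delta_2\le n-2$, $\Delta_3\le n-1$ and $F(\mathbf G)\le 3n-C$ that do not pack. *)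

From mathcomp Require Import all_boot.
Set Implicit Arguments. Unset Strict Implicit. Unset Printing Implicit Defensive.

(* A graph triple of order n: V1 = V2 = 'I_n (two disjoint copies),
   G1 : rel on V1, G2 : rel on V2 (simple graphs: irreflexive, symmetric),
   G3 : rel 'I_n 'I_n, where G3 v w means the edge v w with v in V1, w in V2. *)
Definition simple_graph (n : nat) (G : rel 'I_n) : Prop :=
  irreflexive G /\ symmetric G.

Definition graph_triple (n : nat) (G1 G2 G3 : rel 'I_n) : Prop :=
  simple_graph G1 /\ simple_graph G2.

Definition packs (n : nat) (G1 G2 G3 : rel 'I_n) : Prop :=
  exists f : 'I_n -> 'I_n, bijective f /\
    (forall v, ~~ G3 v (f v)) /\
    (forall u v, G1 u v -> ~~ G2 (f u) (f v)).

Definition wdeg (n : nat) (G : rel 'I_n) (v : 'I_n) : nat := #|[set u | G v u]|.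
Definition d3_1 (n : nat) (G3 : rel 'I_n) (v : 'I_n) : nat := #|[set w | G3 v w]|.
Definition d3_2 (n : nat) (G3 : rel 'I_n) (w : 'I_n) : nat := #|[set v | G3 v w]|.

Definition nedges (n : nat) (G : rel 'I_n) : nat :=
  #|[set p : 'I_n * 'I_n | (p.1 < p.2) && G p.1 p.2]|.
Definition nedges3 (n : nat) (G3 : rel 'I_n) : nat :=
  #|[set p : 'I_n * 'I_n | G3 p.1 p.2]|.

Definition maxdeg (n : nat) (d : 'I_n -> nat) : nat := \big[maxn/0]_(v < n) d v.
Definition Delta1 n (G1 : rel 'I_n) := maxdeg (wdeg G1).
Definition Delta2 n (G2 : rel 'I_n) := maxdeg (wdeg G2).
Definition Delta31 n (G3 : rel 'I_n) := maxdeg (d3_1 G3).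
Definition Delta32 n (G3 : rel 'I_n) := maxdeg (d3_2 G3).
Definition Delta3 n (G3 : rel 'I_n) := maxn (Delta31 G3) (Delta32 G3).

(* \mathcal D ; truncated nat subtraction x - 4 = max{x-4,0} *)
Definition calD n (G1 G2 G3 : rel 'I_n) : nat :=
  maxn (Delta1 G1 + (Delta32 G3 - 4)) (Delta2 G2 + (Delta31 G3 - 4)).

Definition Fval n (G1 G2 G3 : rel 'I_n) : nat :=
  nedges G1 + nedges G2 + nedges3 G3 + calD G1 G2 G3.

Definition constC : nat := 11 * 195 ^ 2 + 4.

(* the hypotheses Delta1,Delta2 <= n-2, Delta3 <= n-1, F <= 3n - C,
   written without subtraction (integer reading). *)
Definition admissible n (G1 G2 G3 : rel 'I_n) : Prop :=
  graph_triple G1 G2 G3 /\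
  Delta1 G1 + 2 <= n /\ Delta2 G2 + 2 <= n /\ Delta3 G3 + 1 <= n /\
  Fval G1 G2 G3 + constC <= 3 * n.

Definition minimal_counterexample n (G1 G2 G3 : rel 'I_n) : Prop :=
  admissible G1 G2 G3 /\ ~ packs G1 G2 G3 /\
  (forall m (H1 H2 H3 : rel 'I_m), m < n -> admissible H1 H2 H3 -> packs H1 H2 H3).

From mathcomp Require Import all_boot perm zify.
Set Implicit Arguments. Unset Strict Implicit. Unset Printing Implicit Defensive.

(* If v in V1 and w in V2 are
   not adjacent in G3 and d(v) + d(w) >= 3, deleting them leaves an admissible triple of
   order n - 1, which packs by minimality; this gives a bijection f with f v = w that
   violates only constraints at v, and no transposition (v z) may repair it. Taking for v
   a vertex without G1-edges (available when some white degree in V2 is at least n - 2,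
   when some vertex of V1 has only G3-edges, or when some d(w) exceeds 2 while V1 has an
   isolated vertex), a leaf of G1 (when at most six vertices of V1 are isolated), or else
   a non-isolated vertex of least degree, the sparsity leaves room for such a z. Hence all
   of V1 is isolated, and then the identity packs. *)

Lemma card_set_sum (T : finType) (Q : pred T) : #|[set x | Q x]| = \sum_x (Q x : nat).
Proof.
rewrite -sum1_card big_mkcond /=; apply: eq_bigr => i _; rewrite inE; by case: (Q i).
Qed.

Lemma card_set_exists_le (T U : finType) (P : pred U) (R : U -> T -> bool) :
  #|[set z | [exists y, P y && R y z]]| <= \sum_(y | P y) #|[set z | R y z]|.
Proof.
rewrite (card_set_sum (fun z => [exists y, P y && R y z])).
rewrite (eq_bigr (fun y => \sum_z (R y z : nat))) => [|y _]; last exact: card_set_sum.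
rewrite exchange_big /=; apply: leq_sum => z _.
case: existsP => [[y /andP[Py Ryz]]|] //=.
by rewrite (bigD1 y) //= Ryz leq_addr.
Qed.

Lemma leq_add_card_disjoint (T : finType) (A B C : {set T}) :
  A \subset C -> B \subset C -> (forall x, x \in A -> x \notin B) -> #|A| + #|B| <= #|C|.
Proof.
move=> AC BC AB; rewrite -cardsUI.
have -> : A :&: B = set0.
  apply/setP => x; rewrite !inE; apply/negbTE/negP => /andP[xA xB].
  by move: (AB x xA); rewrite xB.
by rewrite cards0 addn0 subset_leq_card // subUset AC BC.
Qed.

Lemma exists_in_notin (T : finType) (A B : {set T}) :
  #|B| < #|A| -> exists2 z, z \in A & z \notin B.
Proof.
move=> ltBA; case: (boolP (A \subset B)) => [/subset_leq_card | /subsetPn[z zA zB]].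
  by rewrite leqNgt ltBA.
by exists z.
Qed.

Lemma exists_notin n (B : {set 'I_n}) : #|B| < n -> exists z, z \notin B.
Proof.
move=> ltBn; have [|z _ zB] := @exists_in_notin _ setT B; last by exists z.
by rewrite cardsT card_ord.
Qed.

Lemma card_set_comp_bij (T : finType) (f : T -> T) (P : pred T) : bijective f ->
  #|[set z | P (f z)]| = #|[set x | P x]|.
Proof.
move=> /bij_inj finj; rewrite -[RHS](card_preimset _ finj).
by apply: eq_card => z; rewrite !inE.
Qed.

Lemma ltn_lift n (h : 'I_n) (i j : 'I_n.-1) : (lift h i < lift h j) = (i < j).
Proof. by rewrite /= !ltnNge leq_bump2. Qed.

Lemma card_lift n (h : 'I_n.+1) (P : pred 'I_n.+1) :
  #|[set y : 'I_n | P (lift h y)]| + P h <= #|[set u | P u]|.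
Proof.
rewrite -(card_imset _ (@lift_inj _ h)) (cardsD1 h [set u | P u]) inE addnC leq_add2l.
apply: subset_leq_card; apply/subsetP => x /imsetP[y]; rewrite !inE => Py ->.
by rewrite Py andbT eq_sym neq_lift.
Qed.

Lemma maxdeg_le n (d : 'I_n -> nat) k : (forall v, d v <= k) -> maxdeg d <= k.
Proof. by move=> le_dk; apply/bigmax_leqP => i _; apply: le_dk. Qed.

Lemma leq_maxdeg n (d : 'I_n -> nat) v : d v <= maxdeg d.
Proof. exact: leq_bigmax. Qed.

Lemma maxdeg_mono n m (d1 : 'I_n -> nat) (d2 : 'I_m -> nat) (l : 'I_n -> 'I_m) :
  (forall x, d1 x <= d2 (l x)) -> maxdeg d1 <= maxdeg d2.
Proof. by move=> le_d; apply: maxdeg_le => x; apply: leq_trans (le_d x) (leq_maxdeg _ _). Qed.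

Lemma wdeg_gt0 n (G : rel 'I_n) y u : G y u -> 0 < wdeg G y.
Proof. by move=> Gyu; apply/card_gt0P; exists u; rewrite inE. Qed.

Lemma nadj_of_card0 n (G : rel 'I_n) v u : #|[set y | G v y]| = 0 -> ~~ G v u.
Proof. by move=> /eqP; rewrite cards_eq0 => /eqP/setP/(_ u); rewrite !inE => ->. Qed.

Lemma exists_nadj n (G : rel 'I_n) v : #|[set w | G v w]| < n -> exists w, ~~ G v w.
Proof. by move=> /exists_notin[w]; rewrite inE; exists w. Qed.

Section SimpleGraphDegrees.

Variables (n : nat) (G : rel 'I_n).
Hypotheses (irrG : irreflexive G) (symG : symmetric G).

Lemma wdeg_le_incident_edges x :
  wdeg G x <= #|[set p : 'I_n * 'I_n | (p.1 < p.2) && G p.1 p.2 && ((p.1 == x) || (p.2 == x))]|.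
Proof.
pose edge (u : 'I_n) := if x < u then (x, u) else (u, x).
have edge_inj : injective edge.
  move=> u u'; rewrite /edge.
  case: (ltnP x u) => hu; case: (ltnP x u') => hu' /pair_equal_spec[e1 e2]; try by [].
  - by subst; rewrite ltnn in hu.
  - by subst; rewrite ltnn in hu'.
rewrite /wdeg -(card_imset _ edge_inj); apply: subset_leq_card.
apply/subsetP => p /imsetP[u]; rewrite inE => Gxu ->; rewrite inE /edge.
case: (ltnP x u) => hu /=; first by rewrite hu Gxu eqxx.
have nux : u != x by apply: contraTneq Gxu => ->; rewrite irrG.
by rewrite eqxx orbT andbT ltn_neqAle hu nux /= symG.
Qed.

Lemma wdeg_add_le_nedges x h : x != h -> ~~ G x h -> wdeg G x + wdeg G h <= nedges G.
Proof.
move=> xh nGxh.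
apply: leq_trans (leq_add (wdeg_le_incident_edges x) (wdeg_le_incident_edges h)) _.
apply: leq_add_card_disjoint; try by apply/subsetP => p; rewrite !inE => /andP[].
move=> [a b]; rewrite !inE /= => /andP[/andP[_ Gab] ex]; apply/negP => /andP[_ eh].
case/orP: ex => /eqP ea; case/orP: eh => /eqP eb; subst.
- by rewrite eqxx in xh.
- by rewrite Gab in nGxh.
- by rewrite symG Gab in nGxh.
- by rewrite eqxx in xh.
Qed.

Lemma sum_wdeg_le_double_nedges : \sum_(x < n) wdeg G x <= 2 * nedges G.
Proof.
have -> : \sum_(x < n) wdeg G x = #|[set p : 'I_n * 'I_n | G p.1 p.2]|.
  rewrite card_set_sum -(pair_bigA _ (fun x y => (G x y : nat))).
  by apply: eq_bigr => x _; rewrite /wdeg card_set_sum.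
set E := [set p : 'I_n * 'I_n | (p.1 < p.2) && G p.1 p.2].
apply: (@leq_trans #|E :|: [set (p.2, p.1) | p in E]|).
  apply: subset_leq_card; apply/subsetP => [[a b]]; rewrite inE /= => Gab.
  case: (ltngtP a b) => hab.
  - by rewrite inE; apply/orP; left; rewrite inE /= hab Gab.
  - rewrite inE; apply/orP; right; apply/imsetP; exists (b, a) => //.
    by rewrite inE /= hab symG.
  - by move/val_inj: hab => e; subst; rewrite irrG in Gab.
rewrite /nedges -/E mul2n -addnn; apply: leq_trans (leq_card_setU _ _) _.
by rewrite leq_add2l leq_imset_card.
Qed.

Lemma double_wdeg_le_sum (G3 : rel 'I_n) u :
  2 * wdeg G u <= \sum_(v < n) (wdeg G v + d3_1 G3 v).
Proof.
apply: (@leq_trans (\sum_(v < n) (if v == u then wdeg G u else (G u v : nat)))).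
  rewrite (bigD1 u) //= eqxx mul2n -addnn leq_add2l.
  rewrite /wdeg card_set_sum (bigD1 u) //= irrG add0n.
  by apply: eq_leq; apply: eq_bigr => i /negbTE ->.
apply: leq_sum => v _; case: eqP => [->|_]; first exact: leq_addr.
case Guv: (G u v) => //=; apply: leq_trans (leq_addr _ _); apply: (wdeg_gt0 (u := u)).
by rewrite symG.
Qed.

End SimpleGraphDegrees.

Lemma d3_2_le_sum n (G1 G3 : rel 'I_n) y : d3_2 G3 y <= \sum_(v < n) (wdeg G1 v + d3_1 G3 v).
Proof.
rewrite /d3_2 card_set_sum; apply: leq_sum => v _.
case Gvy: (G3 v y) => //=; apply: leq_trans (leq_addl _ _).
by apply/card_gt0P; exists y; rewrite inE.
Qed.

Lemma sum_d3_2 n (G3 : rel 'I_n) : \sum_(w < n) d3_2 G3 w = \sum_(v < n) d3_1 G3 v.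
Proof.
rewrite /d3_2 /d3_1.
under eq_bigr => w _ do rewrite card_set_sum.
under [in RHS]eq_bigr => v _ do rewrite card_set_sum.
by rewrite exchange_big.
Qed.

Lemma constC_ge : 400 <= constC.
Proof.
rewrite /constC; apply: leq_trans (leq_addr _ _).
by apply: leq_trans (leq_pmull _ _); rewrite ?expn_gt0.
Qed.

Definition delv n (G : rel 'I_n.+1) (v : 'I_n.+1) : rel 'I_n :=
  fun a b => G (lift v a) (lift v b).
Definition delvw n (G : rel 'I_n.+1) (v w : 'I_n.+1) : rel 'I_n :=
  fun a b => G (lift v a) (lift w b).

Section Deletion.

Variables (n : nat) (G : rel 'I_n.+1).

Lemma simple_graph_delv v : simple_graph G -> simple_graph (delv G v).
Proof. by case=> irrG symG; split => [x|x y]; rewrite /delv ?irrG // symG. Qed.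

Lemma wdeg_delv v x : wdeg (delv G v) x + G (lift v x) v <= wdeg G (lift v x).
Proof. exact: (card_lift v (G (lift v x))). Qed.

Lemma wdeg_delv_le v x : wdeg (delv G v) x <= wdeg G (lift v x).
Proof. exact: leq_trans (leq_addr _ _) (wdeg_delv v x). Qed.

Lemma d3_1_delvw v w x : d3_1 (delvw G v w) x <= d3_1 G (lift v x).
Proof. exact: leq_trans (leq_addr _ _) (card_lift w (G (lift v x))). Qed.

Lemma d3_2_delvw v w y : d3_2 (delvw G v w) y <= d3_2 G (lift w y).
Proof. exact: leq_trans (leq_addr _ _) (card_lift v (fun a => G a (lift w y))). Qed.

Lemma nedges_delv v : irreflexive G -> symmetric G ->
  nedges (delv G v) + wdeg G v <= nedges G.
Proof.
move=> irrG symG.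
pose liftp (p : 'I_n * 'I_n) := (lift v p.1, lift v p.2).
have liftp_inj : injective liftp by move=> [a b] [c d]; rewrite /liftp /= => /pair_equal_spec[/lift_inj -> /lift_inj ->].
rewrite /nedges -(card_imset _ liftp_inj).
apply: leq_trans (leq_add (leqnn _) (wdeg_le_incident_edges irrG symG v)) _.
apply: leq_add_card_disjoint.
- by apply/subsetP => p /imsetP[q]; rewrite inE => Hq ->; rewrite inE /= ltn_lift.
- by apply/subsetP => p; rewrite !inE => /andP[].
- move=> p /imsetP[q] _ ->; rewrite inE /= negb_and; apply/orP; right.
  by rewrite negb_or !(eq_sym (lift v _)) !neq_lift.
Qed.

Lemma nedges3_delvw v w : ~~ G v w ->
  nedges3 (delvw G v w) + d3_1 G v + d3_2 G w <= nedges3 G.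
Proof.
move=> nGvw.
pose liftp (p : 'I_n * 'I_n) := (lift v p.1, lift w p.2).
have liftp_inj : injective liftp by move=> [a b] [c d]; rewrite /liftp /= => /pair_equal_spec[/lift_inj -> /lift_inj ->].
set Ev := [set (v, y) | y in [set y | G v y]].
set Ew := [set (x, w) | x in [set x | G x w]].
have -> : d3_1 G v = #|Ev| by rewrite card_imset // => a b [].
have -> : d3_2 G w = #|Ew| by rewrite card_imset // => a b [].
rewrite /nedges3 -(card_imset _ liftp_inj) -addnA.
have EvEw : #|Ev| + #|Ew| <= #|Ev :|: Ew|.
  apply: leq_add_card_disjoint; [exact: subsetUl | exact: subsetUr |].
  move=> p /imsetP[y]; rewrite inE => Gvy -> /=; apply/imsetP => [[x]]; rewrite inE => Gxw.
  by case=> e e'; subst; rewrite Gvy in nGvw.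
apply: leq_trans (leq_add (leqnn _) EvEw) _.
apply: leq_add_card_disjoint.
- by apply/subsetP => p /imsetP[q]; rewrite inE => ? ->; rewrite inE.
- by apply/subsetP => p /setUP[] /imsetP[y]; rewrite inE => ? ->; rewrite inE.
- move=> p /imsetP[q] _ ->; apply/negP => /setUP[] /imsetP[y] _ [e e'].
  + by move: (neq_lift v q.1); rewrite e eqxx.
  + by move: (neq_lift w q.2); rewrite e' eqxx.
Qed.

End Deletion.

(* Removing v and w lowers F by at least d(v) + d(w) >= 3. *)
Lemma admissible_delete n (G1 G2 G3 : rel 'I_n.+1) v w :
  graph_triple G1 G2 G3 -> Fval G1 G2 G3 + constC <= 3 * n.+1 ->
  (forall u, wdeg G1 u + 3 <= n.+1) ->
  (forall x, x != w -> wdeg G2 x + 3 <= n.+1 + G2 x w) ->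
  (forall u, d3_1 G3 u + 2 <= n.+1) -> (forall y, d3_2 G3 y + 2 <= n.+1) ->
  ~~ G3 v w -> 3 <= wdeg G1 v + d3_1 G3 v + (wdeg G2 w + d3_2 G3 w) ->
  admissible (delv G1 v) (delv G2 w) (delvw G3 v w).
Proof.
move=> [simple1 simple2] HF HD1 HD2 HD31 HD32 nvw drop.
have n_ge2 : 2 <= n by have := constC_ge; move: HF; lia.
split; [|split; [|split; [|split]]].
- by split; apply: simple_graph_delv.
- suff : Delta1 (delv G1 v) <= n - 2 by lia.
  by apply: maxdeg_le => x; have := wdeg_delv_le G1 v x; have := HD1 (lift v x); lia.
- suff : Delta2 (delv G2 w) <= n - 2 by lia.
  apply: maxdeg_le => x; have := wdeg_delv G2 w x; have := HD2 (lift w x).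
  by rewrite eq_sym neq_lift => /(_ isT); lia.
- suff [] : Delta31 (delvw G3 v w) <= n - 1 /\ Delta32 (delvw G3 v w) <= n - 1.
    by rewrite /Delta3; lia.
  split; apply: maxdeg_le => x.
  + by have := d3_1_delvw G3 v w x; have := HD31 (lift v x); lia.
  + by have := d3_2_delvw G3 v w x; have := HD32 (lift w x); lia.
have D1 : Delta1 (delv G1 v) <= Delta1 G1 by apply: maxdeg_mono; apply: wdeg_delv_le.
have D2 : Delta2 (delv G2 w) <= Delta2 G2 by apply: maxdeg_mono; apply: wdeg_delv_le.
have D31 : Delta31 (delvw G3 v w) <= Delta31 G3 by apply: maxdeg_mono; apply: d3_1_delvw.
have D32 : Delta32 (delvw G3 v w) <= Delta32 G3 by apply: maxdeg_mono; apply: d3_2_delvw.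
have E1 := nedges_delv v simple1.1 simple1.2.
have E2 := nedges_delv w simple2.1 simple2.2.
have E3 := nedges3_delvw nvw.
move: HF; rewrite /Fval /calD; lia.
Qed.

Definition partial_packing n (G1 G2 G3 : rel 'I_n) v w (f : 'I_n -> 'I_n) :=
  [/\ bijective f, f v = w, forall u, u != v -> ~~ G3 u (f u) &
      forall a b, a != v -> b != v -> G1 a b -> ~~ G2 (f a) (f b)].

Lemma bij_lift_extend n (v w : 'I_n.+1) (g : 'I_n -> 'I_n) : bijective g ->
  exists f : 'I_n.+1 -> 'I_n.+1,
    [/\ bijective f, f v = w & forall x, f (lift v x) = lift w (g x)].
Proof.
case=> gi gK giK.
pose f u := if unlift v u is Some x then lift w (g x) else w.
pose h u := if unlift w u is Some y then lift v (gi y) else v.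
exists f; split=> [||x]; last by rewrite /f liftK.
- exists h => u; rewrite /f /h.
  + by case: (unliftP v u) => [x ->|->]; rewrite ?liftK ?gK ?unlift_none.
  + by case: (unliftP w u) => [y ->|->]; rewrite ?liftK ?giK ?unlift_none.
- by rewrite /f unlift_none.
Qed.

Lemma partial_packing_of_delete n (G1 G2 G3 : rel 'I_n.+1) v w :
  packs (delv G1 v) (delv G2 w) (delvw G3 v w) -> exists f, partial_packing G1 G2 G3 v w f.
Proof.
move=> [g [gbij [g3 g12]]]; have [f [fbij fv fl]] := bij_lift_extend v w gbij.
exists f; split => //.
- by move=> u; case: (unliftP v u) => [x ->|->]; rewrite ?eqxx // fl => _; apply: g3.
- move=> a b; case: (unliftP v a) => [x ->|->]; rewrite ?eqxx //.
  case: (unliftP v b) => [y ->|->]; rewrite ?eqxx //.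
  by move=> _ _ Gxy; rewrite !fl; apply: g12.
Qed.

(* What [z] must satisfy for [f \o tperm v z] to be a packing. *)
Definition swappable n (G1 G2 G3 : rel 'I_n) v w (f : 'I_n -> 'I_n) z :=
  [/\ ~~ G3 z w, ~~ G3 v (f z),
      forall y, G1 z y -> y != v -> ~~ G2 w (f y),
      forall u, G1 v u -> u != z -> ~~ G2 (f z) (f u) &
      G1 v z -> ~~ G2 (f z) w].

Lemma tpermP (T : finType) (v z a : T) :
  [\/ a = v /\ tperm v z a = z, [/\ a != v, a = z & tperm v z a = v] |
      [/\ a != v, a != z & tperm v z a = a]].
Proof.
case: (eqVneq a v) => [->|av]; first by constructor 1; rewrite tpermL.
case: (eqVneq a z) => [->|az]; first by constructor 2; rewrite tpermR.
by constructor 3; rewrite tpermD // eq_sym.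
Qed.

Lemma packs_swap n (G1 G2 G3 : rel 'I_n) v w f z :
  graph_triple G1 G2 G3 -> partial_packing G1 G2 G3 v w f ->
  swappable G1 G2 G3 v w f z -> packs G1 G2 G3.
Proof.
move=> [[irr1 sym1] [irr2 sym2]] [fbij fv f3 f12] [S1 S2 S3 S4 S5].
exists (f \o tperm v z); split; [|split].
- by apply: bij_comp => //; exists (tperm v z); apply: tpermK.
- by move=> a /=; case: (tpermP v z a) => [[-> ->]|[av -> ->]|[av az ->]];
     rewrite ?fv //; apply: f3.
move=> a b /=.
case: (tpermP v z a) => [[-> ->]|[av -> ->]|[av az ->]];
case: (tpermP v z b) => [[-> ->]|[bv -> ->]|[bv bz ->]]; rewrite ?fv ?irr1 // => Gab.
- exact: S4.
- by rewrite sym2; apply: S5; rewrite sym1.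
- exact: S3.
- by rewrite sym2; apply: S4; rewrite // sym1.
- by rewrite sym2; apply: S3; rewrite // sym1.
- exact: f12.
Qed.

Lemma swappable_self n (G1 G2 G3 : rel 'I_n) v w f :
  wdeg G1 v = 0 -> ~~ G3 v w -> partial_packing G1 G2 G3 v w f -> swappable G1 G2 G3 v w f v.
Proof.
move=> /nadj_of_card0 nG1v nvw [_ fv _ _].
split; rewrite ?fv // ?(negbTE (nG1v v)) //.
all: by move=> y; rewrite (negbTE (nG1v y)).
Qed.

Section DegreeSequence.

Variables (n : nat) (d : 'I_n -> nat).

Lemma leq_sum_card_eq0 : n <= \sum_(v < n) d v + #|[set v | d v == 0]|.
Proof.
rewrite card_set_sum -big_split /= -{1}(card_ord n) -sum1_card.
by apply: leq_sum => v _; case: (d v).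
Qed.

Lemma leq_double_sum_card_eq0 : (forall v, d v != 1) ->
  2 * n <= \sum_(v < n) d v + 2 * #|[set v | d v == 0]|.
Proof.
move=> dN1; rewrite card_set_sum big_distrr -big_split /=.
rewrite -{1}(card_ord n) -sum1_card big_distrr; apply: leq_sum => v _ /=.
by move: (dN1 v); case: (d v) => // [[|k]].
Qed.

Lemma sum_pred_le (d' : 'I_n -> nat) (P : pred 'I_n) : (forall y, d' y <= d y) ->
  \sum_(y | P y) d' y + n <= \sum_(y < n) d y + #|[set y | P y]| + #|[set y | d y == 0]|.
Proof.
move=> le_d; rewrite !card_set_sum -!big_split big_mkcond /=.
rewrite -[X in _ + X <= _](card_ord n) -sum1_card -big_split; apply: leq_sum => y _ /=.
by have := le_d y; case: (P y) => /=; case: (d y) => [|k]; lia.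
Qed.

Lemma card_neq0_mul_le k : (forall y, d y != 0 -> k <= d y) ->
  #|[set y | d y != 0]| * k <= \sum_(y < n) d y.
Proof.
move=> le_kd; rewrite card_set_sum big_distrl /=; apply: leq_sum => y _.
by case: eqP => [->|/eqP dy0] //=; rewrite mul1n le_kd.
Qed.

End DegreeSequence.

Lemma packs_of_isolated n (G1 G2 G3 : rel 'I_n) :
  (forall v, wdeg G1 v + d3_1 G3 v = 0) -> packs G1 G2 G3.
Proof.
move=> iso; have {}iso v : wdeg G1 v = 0 /\ d3_1 G3 v = 0 by have := iso v; lia.
exists id; split; first by exists id.
split=> [v|a b] /=; last by rewrite (negbTE (nadj_of_card0 _ (iso a).1)).
exact: nadj_of_card0 (iso v).2.
Qed.

(* By minimality the triple obtained by deleting v and w packs; this partial packing of G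
   must then fail to be repaired by any transposition (v z). *)
Lemma minimal_counterexample_no_swap n (G1 G2 G3 : rel 'I_n) v w :
  minimal_counterexample G1 G2 G3 ->
  (forall u, wdeg G1 u + 3 <= n) ->
  (forall x, x != w -> wdeg G2 x + 3 <= n + G2 x w) ->
  (forall u, d3_1 G3 u + 2 <= n) -> (forall y, d3_2 G3 y + 2 <= n) ->
  ~~ G3 v w -> 3 <= wdeg G1 v + d3_1 G3 v + (wdeg G2 w + d3_2 G3 w) ->
  (forall f, partial_packing G1 G2 G3 v w f -> exists z, swappable G1 G2 G3 v w f z) ->
  False.
Proof.
case: n G1 G2 G3 v w => [|n] G1 G2 G3 v w; first by case: v.
move=> [[triple [_ [_ [_ HF]]]] [not_packs minimal]] HD1 HD2 HD31 HD32 nvw drop swap.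
have [|f fp] := @partial_packing_of_delete _ G1 G2 G3 v w.
  by apply: minimal (ltnSn n) _; apply: admissible_delete.
have [z zs] := swap f fp.
by apply: not_packs; apply: packs_swap fp zs.
Qed.

(* m non-isolated and i isolated vertices of V1, the lightest non-isolated one having
   white degree d1 and G3-degree d3. *)
Lemma light_arith n m i d1 d3 :
  m * (d1 + d3) < 2 * n -> d1 + 1 <= m -> 7 <= i -> i + m = n -> 100 <= n ->
  d3 + 5 <= n -> d3 + 2 * d1 < i.
Proof.
move=> h1 h2 h3 h4 h5 h6; rewrite ltnNge; apply/negP => h.
case: m h1 h2 h4 => [|[|[|[|[|m]]]]] h1 h2 h4; try lia.
have : 0 <= m * (i - 7) by [].
nia.
Qed.

Section MinimalCounterexample.

Variables (n : nat) (G1 G2 G3 : rel 'I_n).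
Hypothesis mincex : minimal_counterexample G1 G2 G3.
Hypothesis d2_ge2 : forall w, 2 <= wdeg G2 w + d3_2 G3 w.

Local Notation d1 v := (wdeg G1 v + d3_1 G3 v).
Local Notation d2 w := (wdeg G2 w + d3_2 G3 w).
Local Notation S := (\sum_(v < n) d1 v).
Local Notation D := (calD G1 G2 G3).
Local Notation isolated := [set v | d1 v == 0].

Hypothesis too_sparse : D + S + 12 < 2 * n.

Let irr1 : irreflexive G1. Proof. by case: mincex => [[[[]]]]. Qed.
Let sym1 : symmetric G1. Proof. by case: mincex => [[[[]]]]. Qed.
Let irr2 : irreflexive G2. Proof. by case: mincex => [[[_ []]]]. Qed.
Let sym2 : symmetric G2. Proof. by case: mincex => [[[_ []]]]. Qed.
Let Delta2_small : Delta2 G2 + 2 <= n. Proof. by case: mincex => [[_ [_ []]]]. Qed.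
Let F_small : Fval G1 G2 G3 + constC <= 3 * n.
Proof. by case: mincex => [[_ [_ [_ [_]]]]]. Qed.

Let n_large : 100 <= n. Proof. by have := constC_ge; move: F_small; lia. Qed.

Let wdeg1_le_D u : wdeg G1 u <= D.
Proof. by have := leq_maxdeg (wdeg G1) u; rewrite /calD /Delta1; lia. Qed.
Let wdeg2_le_D x : wdeg G2 x <= D.
Proof. by have := leq_maxdeg (wdeg G2) x; rewrite /calD /Delta2; lia. Qed.
Let d3_1_le_D u : d3_1 G3 u <= D + 4.
Proof. by have := leq_maxdeg (d3_1 G3) u; rewrite /calD /Delta31; lia. Qed.
Let d3_2_le_D y : d3_2 G3 y <= D + 4.
Proof. by have := leq_maxdeg (d3_2 G3) y; rewrite /calD /Delta32; lia. Qed.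

Let d1_le_S u : d1 u <= S.
Proof. by rewrite (bigD1 u) //= leq_addr. Qed.

Let wdeg1_small u : wdeg G1 u + 3 <= n.
Proof. by have := double_wdeg_le_sum irr1 sym1 G3 u; have := wdeg1_le_D u; lia. Qed.
Let d3_1_small u : d3_1 G3 u + 5 <= n.
Proof. by have := d1_le_S u; have := d3_1_le_D u; lia. Qed.
Let d3_2_small y : d3_2 G3 y + 5 <= n.
Proof. by have := d3_2_le_sum G1 G3 y; have := d3_2_le_D y; lia. Qed.

Let exists_nadj3 v : exists w, ~~ G3 v w.
Proof. by apply: exists_nadj; have := d3_1_small v; rewrite /d3_1; lia. Qed.

Let no_swap v w :
  ~~ G3 v w -> 3 <= d1 v + d2 w ->
  (forall x, x != w -> wdeg G2 x + 3 <= n + G2 x w) ->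
  (forall f, partial_packing G1 G2 G3 v w f -> exists z, swappable G1 G2 G3 v w f z) ->
  False.
Proof.
move=> nvw drop HD2; apply: (minimal_counterexample_no_swap mincex wdeg1_small HD2) => // u.
- by have := d3_1_small u; lia.
- by have := d3_2_small u; lia.
Qed.

Let no_swap_wdeg1_eq0 v w :
  wdeg G1 v = 0 -> ~~ G3 v w -> 3 <= d1 v + d2 w ->
  (forall x, x != w -> wdeg G2 x + 3 <= n + G2 x w) -> False.
Proof.
move=> dv0 nvw drop HD2; apply: (no_swap nvw drop HD2) => f fp.
by exists v; apply: swappable_self dv0 nvw fp.
Qed.

Lemma wdeg2_small h : wdeg G2 h + 3 <= n.
Proof.
rewrite leqNgt; apply/negP => h_big.
have /card_gt0P[v] : 0 < #|isolated|.
  by have := wdeg2_le_D h; have := leq_sum_card_eq0 (fun v => d1 v); lia.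
rewrite inE => /eqP d1v0.
have nvh : ~~ G3 v h by apply: nadj_of_card0; rewrite -/(d3_1 G3 v); lia.
apply: (@no_swap_wdeg1_eq0 v h) => //; [lia | lia |] => x xh.
case Gxh: (G2 x h).
  by have := leq_maxdeg (wdeg G2) x; have := Delta2_small; rewrite /Delta2 /=; lia.
(* e2 + D <= F and D >= wdeg h >= n - 2 leave no room for wdeg x *)
have := wdeg_add_le_nedges irr2 sym2 xh (negbT Gxh).
by have := wdeg2_le_D h; have := constC_ge; move: F_small; rewrite /Fval; lia.
Qed.

Let wdeg2_small_off w x : x != w -> wdeg G2 x + 3 <= n + G2 x w.
Proof. by move=> _; apply: leq_trans (wdeg2_small x) (leq_addr _ _). Qed.

Lemma d3_1_eq0_of_wdeg1_eq0 v : wdeg G1 v = 0 -> d3_1 G3 v = 0.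
Proof.
move=> dv0; apply/eqP; rewrite -leqn0 leqNgt; apply/negP => d3v_gt0.
have [w nvw] := exists_nadj3 v.
by apply: (no_swap_wdeg1_eq0 dv0 nvw _ (@wdeg2_small_off w)); have := d2_ge2 w; lia.
Qed.

Lemma d2_le2 v w : v \in isolated -> d2 w <= 2.
Proof.
rewrite inE => /eqP d1v0; rewrite leqNgt; apply/negP => d2w_gt2.
have nvw : ~~ G3 v w by apply: nadj_of_card0; rewrite -/(d3_1 G3 v); lia.
by apply: (no_swap_wdeg1_eq0 _ nvw _ (@wdeg2_small_off w)); lia.
Qed.

Lemma exists_leaf : #|isolated| <= 6 -> exists v, d1 v == 1.
Proof.
move=> iso_le6; apply/existsP; apply: contraT => /existsPn noleaf.
by have := leq_double_sum_card_eq0 noleaf; lia.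
Qed.

Lemma exists_light_partner : #|isolated| <= 6 -> exists w, d2 w + #|isolated| <= 10.
Proof.
move=> iso_le6; case: (posnP #|isolated|) => [iso0|/card_gt0P[v vI]]; last first.
  by exists v; have := d2_le2 v vI; lia.
apply/existsP; apply: contraT => /existsPn heavy.
have : 9 * n <= \sum_(w < n) d2 w.
  rewrite -[n in 9 * n]card_ord mulnC -sum_nat_const leq_sum // => w _.
  by have := heavy w; rewrite iso0; lia.
have -> : \sum_(w < n) d2 w = \sum_(x < n) wdeg G2 x + \sum_(v < n) d3_1 G3 v.
  by rewrite big_split /= (sum_d3_2 G3).
have := sum_wdeg_le_double_nedges irr2 sym2.
have : \sum_(v < n) d3_1 G3 v <= S by apply: leq_sum => v _; apply: leq_addl.
by have := constC_ge; move: F_small; rewrite /Fval; lia.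
Qed.

(* Every z outside B can be swapped with v; B is small because, outside the isolated
   vertices and the G2-neighbours of w, each vertex contributes at least 1 to S. *)
Lemma leaf_swappable v u w f :
  [set y | G1 v y] = [set u] -> d3_1 G3 v = 0 -> d2 w + #|isolated| <= 10 ->
  partial_packing G1 G2 G3 v w f -> exists z, swappable G1 G2 G3 v w f z.
Proof.
move=> Nv d3v0 light [fbij _ _ _].
set Bw := [set z | [exists y, G2 w (f y) && G1 y z]].
set B := [set z | G3 z w] :|: Bw :|: [set u] :|: [set z | G2 (f u) (f z)].
have cB : #|B| < n.
  have : #|Bw| <= \sum_(y | G2 w (f y)) wdeg G1 y := card_set_exists_le _ _.
  have : #|[set y | G2 w (f y)]| = wdeg G2 w := card_set_comp_bij (G2 w) fbij.
  have : #|[set z | G2 (f u) (f z)]| = wdeg G2 (f u) := card_set_comp_bij (G2 (f u)) fbij.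
  have := sum_pred_le (fun y => G2 w (f y)) (fun y => leq_addr (d3_1 G3 y) (wdeg G1 y)).
  have := wdeg2_le_D (f u).
  have : #|B| <= d3_2 G3 w + #|Bw| + 1 + #|[set z | G2 (f u) (f z)]|.
    rewrite -(cards1 u); apply: leq_trans (leq_card_setU _ _) _; rewrite leq_add2r.
    apply: leq_trans (leq_card_setU _ _) _; rewrite leq_add2r.
    exact: leq_card_setU.
  lia.
have [z] := exists_notin cB; rewrite !inE !negb_or => /andP[/andP[/andP[nz3 nzBw] nzu] nzf].
have Nv_u y : G1 v y = (y == u) by move/setP/(_ y): Nv; rewrite !inE.
exists z; split => //.
- exact: nadj_of_card0.
- move=> y Gzy _; apply: contra nzBw => Gwfy; apply/existsP; exists y.
  by rewrite Gwfy sym1.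
- by move=> y; rewrite Nv_u => /eqP -> _; rewrite sym2.
- by rewrite Nv_u (negbTE nzu).
Qed.

Lemma isolated_gt6 : 6 < #|isolated|.
Proof.
rewrite ltnNge; apply/negP => iso_le6.
have [v /eqP d1v1] := exists_leaf iso_le6.
have wdeg1v : wdeg G1 v = 1.
  by case: (posnP (wdeg G1 v)) => [/d3_1_eq0_of_wdeg1_eq0|]; lia.
have d3v0 : d3_1 G3 v = 0 by lia.
have /cards1P[u Nv] : #|[set y | G1 v y]| == 1 by apply/eqP.
have [w light] := exists_light_partner iso_le6.
apply: (no_swap (nadj_of_card0 _ d3v0) _ (@wdeg2_small_off w)).
  by have := d2_ge2 w; lia.
by move=> f; apply: leaf_swappable Nv d3v0 light.
Qed.

Lemma min_nonisolated_light v : 6 < #|isolated| -> v \notin isolated ->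
  (forall y, y \notin isolated -> d1 v <= d1 y) ->
  d3_1 G3 v + 2 * wdeg G1 v < #|isolated|.
Proof.
move=> iso_gt6 vI v_min.
have := cardsC isolated; rewrite card_ord => cardI.
have : #|~: isolated| * d1 v <= S.
  rewrite (eq_card (B := [set y | d1 y != 0])) => [|y]; last by rewrite !inE.
  by apply: card_neq0_mul_le => y y0; apply: v_min; rewrite inE.
have : wdeg G1 v + 1 <= #|~: isolated|.
  rewrite -(cards1 v); apply: leq_add_card_disjoint.
  - apply/subsetP => y; rewrite !inE => Gvy.
    by rewrite sym1 in Gvy; have := wdeg_gt0 Gvy; lia.
  - by apply/subsetP => y; rewrite !inE => /eqP ->; move: vI; rewrite inE.
  - by move=> y; rewrite !inE => Gvy; apply/eqP => yv; rewrite yv irr1 in Gvy.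
move=> DV MB; have := d3_1_small v; have := n_large.
by apply: (@light_arith n #|~: isolated|); lia.
Qed.

Lemma isolated_swappable v w f :
  d3_1 G3 v + 2 * wdeg G1 v < #|isolated| ->
  partial_packing G1 G2 G3 v w f -> exists z, swappable G1 G2 G3 v w f z.
Proof.
move=> light [fbij _ _ _].
have /card_gt0P[v0 v0I] : 0 < #|isolated| by lia.
set Bv := [set z | [exists u, G1 v u && G2 (f u) (f z)]].
set B := [set z | G3 v (f z)] :|: Bv.
have cB : #|B| < #|isolated|.
  have : \sum_(u | G1 v u) #|[set z | G2 (f u) (f z)]| <= \sum_(u | G1 v u) 2.
    apply: leq_sum => u _; rewrite (card_set_comp_bij (G2 (f u)) fbij).
    by have := d2_le2 (f u) v0I; rewrite /wdeg; lia.
  rewrite sum_nat_cond_const.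
  have : #|Bv| <= _ := card_set_exists_le (G1 v) (fun u z => G2 (f u) (f z)).
  have := card_set_comp_bij (G3 v) fbij; have : #|B| <= _ := leq_card_setU _ _.
  by move: light; rewrite /wdeg /d3_1; lia.
have [z] := exists_in_notin cB; rewrite !inE negb_or => /eqP z0 /andP[nz3 nzBv].
have [/nadj_of_card0 nG1z /nadj_of_card0 nG3z] : wdeg G1 z = 0 /\ d3_1 G3 z = 0 by lia.
exists z; split => //.
- by move=> y; rewrite (negbTE (nG1z y)).
- move=> u Gvu _; apply: contra nzBv => Gfzu; apply/existsP; exists u.
  by rewrite Gvu sym2.
- by rewrite sym1 (negbTE (nG1z v)).
Qed.

Lemma all_isolated v : 6 < #|isolated| -> v \in isolated.
Proof.
move=> iso_gt6; apply/negPn/negP => v0I.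
case: (@arg_minnP _ v (fun x => x \notin isolated) (fun x => d1 x) v0I) => v' vI v_min.
have light := min_nonisolated_light iso_gt6 vI v_min.
have [w nvw] := exists_nadj3 v'.
apply: (no_swap nvw _ (@wdeg2_small_off w)); last first.
  by move=> f; apply: isolated_swappable light.
by have := d2_ge2 w; move: vI; rewrite inE; lia.
Qed.

End MinimalCounterexample.

Theorem mainTheorem7 (n : nat) (G1 G2 G3 : rel 'I_n) :
  minimal_counterexample G1 G2 G3 ->
  (forall w : 'I_n, 2 <= wdeg G2 w + d3_2 G3 w) ->
  2 * n <= calD G1 G2 G3 + (\sum_(v < n) (wdeg G1 v + d3_1 G3 v)) + 12.
Proof.
move=> mincex d2_ge2; rewrite leqNgt; apply/negP => too_sparse.
have iso_gt6 := isolated_gt6 mincex d2_ge2 too_sparse.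
have iso v := all_isolated mincex d2_ge2 too_sparse v iso_gt6.
case: mincex => _ [not_packs _]; apply: not_packs.
by apply: packs_of_isolated => v; move: (iso v); rewrite inE => /eqP.
Qed.
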